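(* The cost-LPR calculus and the cost-BC calculus are incomplete: there is a MaxSAT instance $\Gamma$ encoded with blocking variables with $\mathrm{cost}(\Gamma)=1$ such that no derivation from $\Gamma$ in the cost-LPR calculus (and no derivation in the cost-BC calculus) contains a unit clause $b$ for a blocking variable $b$; in particular neither calculus proves $\mathrm{cost}(\Gamma)\ge 1$.
   Context: Literals, clauses, CNFs (multisets of clauses), $\mathrm{Var}(\Gamma)$. A substitution $\sigma$ maps variables to $0$, $1$ or literals, extended by $\sigma(\lnot x)=\lnot\sigma(x)$; $(\sigma\circ\tau)(x)=\sigma(\tau(x))$. A (partial) assignment has $\sigma(x)\in\{0,1,x\}$; its domain is $\sigma^{-1}(\{0,1\})$; total means all variables assigned. $C{\upharpoonright}_\sigma$: apply $\sigma$ to literals and simplify; $\Gamma{\upharpoonright}_\sigma$ is the multiset of $C{\upharpoonright}_\sigma\ne1$, $C\in\Gamma$. $\lnot C$ is the partial assignment falsifying all literals of $C$. $\Gamma\vdash_1 C$ means unit propagation on $\Gamma{\upharpoonright}_{\lnot C}$ derives the empty clause; $\Gamma\vdash_1\Delta$ means this holds for all $D\in\Delta$. A MaxSAT instance encoded with blocking variables is a CNF $\Gamma=H\cup\{C_1\lor b_1,\dots,C_m\lor b_m\}$ with distinct fresh blocking variables $b_i$; $\mathrm{cost}(\alpha)=\sum_i\alpha(b_i)$ for total $\alpha$; $\mathrm{cost}(\Gamma)=\min\{\mathrm{cost}(\alpha):\alpha\models\Gamma\}$. $C$ is cost-LPR w.r.t. $\Gamma$ if there is a partial assignment $\sigma$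 with the same domain as $\lnot C$, differing from $\lnot C$ on exactly one variable, such that (1) $\Gamma{\upharpoonright}_{\lnot C}\vdash_1(\Gamma\cup\{C\}){\upharpoonright}_\sigma$ and (2) $\mathrm{cost}(\tau\circ\sigma)\le\mathrm{cost}(\tau)$ for all total $\tau\supseteq\lnot C$. A clause $C\lor\ell$ is cost-BC w.r.t. $\Gamma$ and the literal $\ell$ if for every clause $D\lor\lnot\ell\in\Gamma$, $C\lor D$ is a tautology, and $\ell$ is not a blocking variable with positive polarity. A derivation in the cost-LPR (resp. cost-BC) calculus from $\Gamma$ is a sequence $D_1,\dots,D_t$ where each $D_i$ is in $\Gamma$, or follows from earlier clauses by weakening (from $A$ infer $B\supseteq A$) or resolution (from $A\lor x$, $B\lor\lnot x$ infer $A\lor B$), or is cost-LPR (resp. cost-BC) w.r.t. $\Gamma\cup\{D_1,\dots,D_{i-1}\}$ with $\mathrm{Var}(D_i)\subseteq\mathrm{Var}(\Gamma)$. *)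

From mathcomp Require Import all_boot.
Set Implicit Arguments. Unset Strict Implicit. Unset Printing Implicit Defensive.

(* Variables are natural numbers; a literal is (variable, polarity):
   (x, true) is x, (x, false) is ~x. *)
Definition lit := (nat * bool)%type.
Definition neg (l : lit) : lit := (l.1, ~~ l.2).
(* A clause is a seq of literals, read as the set of its literals;
   a CNF is a seq (multiset) of clauses. *)
Definition clause := seq lit.
Definition cnf := seq clause.

(* Partial assignment: None = unassigned (sigma x = x), Some b = constant b. *)
Definition passign := nat -> option bool.
Definition tassign := nat -> bool.

Definition lit_val (s : passign) (l : lit) : option bool :=
  match s l.1 with Some v => Some (v == l.2) | None => None end.

(* C|_s : None encodes the satisfied clause 1; otherwise the remaining
   (unassigned) literals, duplicates removed. *)
Definition restrict_clause (s : passign) (C : clause) : option clause :=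
  if has (fun l => lit_val s l == Some true) C then None
  else Some (undup [seq l <- C | lit_val s l == None]).

Definition restrict (s : passign) (G : cnf) : cnf := pmap (restrict_clause s) G.

Definition negC (C : clause) : passign :=
  fun x => if (x, true) \in C then Some false
           else if (x, false) \in C then Some true else None.

Definition unit_pa (l : lit) : passign :=
  fun x => if x == l.1 then Some l.2 else None.

Inductive up_refutes : cnf -> Prop :=
| up_empty F : [::] \in F -> up_refutes F
| up_unit F l : [:: l] \in F -> up_refutes (restrict (unit_pa l) F) -> up_refutes F.

Definition entails1 (F : cnf) (C : clause) : Prop :=
  up_refutes (restrict (negC C) F).

Definition sat_clause (a : tassign) (C : clause) : bool := has (fun l => a l.1 == l.2) C.
Definition sat (a : tassign) (G : cnf) : bool := all (sat_clause a) G.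
Definition cost (bs : seq nat) (a : tassign) : nat := \sum_(b <- bs) a b.

Definition has_cost (G : cnf) (bs : seq nat) (k : nat) : Prop :=
  (exists a, sat a G /\ cost bs a = k) /\ (forall a, sat a G -> k <= cost bs a).

Definition comp (t : tassign) (s : passign) : tassign :=
  fun x => match s x with Some b => b | None => t x end.

Definition extends (t : tassign) (s : passign) : Prop :=
  forall x v, s x = Some v -> t x = v.

Definition cost_LPR (bs : seq nat) (G : cnf) (C : clause) : Prop :=
  exists s : passign,
    (exists x, (exists v, negC C x = Some v /\ s x = Some (~~ v)) /\
               forall y, y <> x -> s y = negC C y) /\
    (forall D, D \in restrict s (rcons G C) -> entails1 (restrict (negC C) G) D) /\
    (forall t, extends t (negC C) -> cost bs (comp t s) <= cost bs t).

Definition tautology (C : clause) : Prop := exists l, l \in C /\ neg l \in C.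

Definition cost_BC (bs : seq nat) (G : cnf) (E : clause) : Prop :=
  exists l, l \in E /\
    (forall F, F \in G -> neg l \in F ->
       tautology ([seq k <- E | k != l] ++ [seq k <- F | k != neg l])) /\
    ~~ (l.2 && (l.1 \in bs)).

Definition cnf_vars (G : cnf) : seq nat := flatten [seq map fst C | C <- G].

Definition step (rule : cnf -> clause -> Prop) (G : cnf) (prev : cnf) (D : clause) : Prop :=
  D \in G
  \/ (exists A, A \in prev /\ {subset A <= D})
  \/ (exists A B x, A \in prev /\ B \in prev /\ (x, true) \in A /\ (x, false) \in B /\
        D =i [seq k <- A | k != (x, true)] ++ [seq k <- B | k != (x, false)])
  \/ (rule (G ++ prev) D /\ {subset map fst D <= cnf_vars G}).

Definition derivation (rule : cnf -> clause -> Prop) (G : cnf) (Ds : seq clause) : Prop :=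
  forall i, i < size Ds -> step rule G (take i Ds) (nth [::] Ds i).

Definition instance (H : cnf) (soft : seq (clause * nat)) : cnf :=
  H ++ [seq rcons p.1 (p.2, true) | p <- soft].
Definition blocking (soft : seq (clause * nat)) : seq nat := map snd soft.
Definition wf_instance (H : cnf) (soft : seq (clause * nat)) : Prop :=
  uniq (blocking soft) /\
  forall b, b \in blocking soft ->
    b \notin cnf_vars H /\ b \notin cnf_vars (map fst soft).

(* The instance has no hard clauses and the soft clauses [x \/ b1] and
   [~x \/ b2]: every model pays for one of them, so its cost is 1, yet for
   each blocking variable [b] some model sets [b] to false.  Having a model
   with [b] false is preserved by every rule of both calculi.  Weakening and
   resolution are sound.  If a cost-LPR clause [C] is false in such a model
   [a], then [a o sigma] is a model of the extended formula; [sigma] cannot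
   flip [b], since flipping [b] from 0 to 1 would raise the cost.  For a
   cost-BC clause, setting the blocked literal [l] true in [a] gives a model,
   and [l] is never a positive blocking literal.  Hence the unit clause [b],
   which has no model with [b] false, is never derived. *)
From Pilot Require Import Defs.
From mathcomp Require Import all_boot zify.
Set Implicit Arguments. Unset Strict Implicit.

Lemma sat_rcons a F C : sat a (rcons F C) = sat a F && sat_clause a C.
Proof. by rewrite /sat all_rcons andbC. Qed.

Lemma lit_eq_or_neg (m l : lit) : m.1 = l.1 -> m = l \/ m = neg l.
Proof. by case: m l => [x p] [y q] /= <-; rewrite /neg /=; case: p; case: q; auto. Qed.

Lemma neg_lit_true (a : tassign) (l : lit) : (a (neg l).1 == (neg l).2) = ~~ (a l.1 == l.2).
Proof. by rewrite /neg /=; case: (a l.1); case: l.2. Qed.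

Lemma tautology_sat a C : tautology C -> sat_clause a C.
Proof.
case=> l [lC nlC]; apply/hasP.
by case al: (a l.1 == l.2); [exists l | exists (neg l) => //; rewrite neg_lit_true al].
Qed.

Lemma weakening_sat a A D : sat_clause a A -> {subset A <= D} -> sat_clause a D.
Proof. by move=> /hasP [l lA al] AD; apply/hasP; exists l; first exact: AD. Qed.

Lemma resolvent_sat a A B x D :
  sat_clause a A -> sat_clause a B ->
  D =i [seq k <- A | k != (x, true)] ++ [seq k <- B | k != (x, false)] ->
  sat_clause a D.
Proof.
move=> /hasP [k kA ak] /hasP [m mB am] eD; apply/hasP.
case ax: (a x).
- exists m => //; rewrite eD mem_cat !mem_filter mB andbT; apply/orP; right.
  by apply/eqP => mx; rewrite mx ax in am.
- exists k => //; rewrite eD mem_cat !mem_filter kA andbT; apply/orP; left.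
  by apply/eqP => kx; rewrite kx ax in ak.
Qed.

Lemma sat_restrict_clause a s C C' :
  extends a s -> restrict_clause s C = Some C' -> sat_clause a C -> sat_clause a C'.
Proof.
rewrite /restrict_clause => as_; case: ifP => // /negbT/hasPn sC [<-] /hasP [l lC al].
apply/hasP; exists l => //; rewrite mem_undup mem_filter lC andbT.
move: (sC l lC); rewrite /lit_val; case sl: (s l.1) => [w|] //.
by rewrite -(as_ _ _ sl) al.
Qed.

Lemma sat_restrict a s F : extends a s -> sat a F -> sat a (restrict s F).
Proof.
move=> as_; elim: F => [|C F IH] //= /andP [aC aF]; rewrite /restrict /=.
case sC: (restrict_clause s C) => [C'|] /=; last exact: IH.
by rewrite (sat_restrict_clause as_ sC aC) (IH aF).
Qed.

Lemma sat_comp_restrict t s F : sat t (restrict s F) -> sat (Defs.comp t s) F.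
Proof.
elim: F => [|C F IH] //; rewrite /restrict /=.
case sC: (restrict_clause s C) => [C'|] /=; last first.
  move=> /IH ->; rewrite andbT; move: sC; rewrite /restrict_clause.
  case: ifP => // /hasP [l lC]; rewrite /lit_val /Defs.comp => sl _.
  by apply/hasP; exists l => //; move: sl; case: (s l.1) => // w; case: (w == l.2).
move=> /andP [tC' /IH ->]; rewrite andbT; move: sC; rewrite /restrict_clause.
case: ifP => // _ [eC']; move: tC'; rewrite -eC' => /hasP [l].
rewrite mem_undup mem_filter /lit_val /Defs.comp => /andP [sl lC] tl.
by apply/hasP; exists l => //; move: sl; case: (s l.1).
Qed.

Lemma up_refutes_unsat F : up_refutes F -> forall a, ~~ sat a F.
Proof.
elim=> [G eG|G l lG _ IH] a; first by apply/allPn; exists [::].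
apply: contra (IH a) => aG; apply: sat_restrict => //.
have /hasP [k] := allP aG _ lG; rewrite inE => /eqP -> /eqP al x v.
by rewrite /unit_pa; case: eqP => // -> [<-].
Qed.

Lemma extends_negC a C : ~~ sat_clause a C -> extends a (negC C).
Proof.
move=> /hasPn aC x v; rewrite /negC.
case: ifP => [xC [<-] | _]; first by move: (aC _ xC) => /=; case: (a x).
by case: ifP => // xC [<-]; move: (aC _ xC) => /=; case: (a x).
Qed.

Lemma entails1_sound a F D : sat a F -> entails1 F D -> sat_clause a D.
Proof.
move=> aF FD; apply/negPn/negP => aD.
by have /negP := up_refutes_unsat FD a; apply; apply: sat_restrict => //; apply: extends_negC.
Qed.

Lemma cost_set_true bs (t t' : tassign) x :
  (forall y, y != x -> t' y = t y) -> t x = false -> t' x = true ->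
  cost bs t' = cost bs t + count_mem x bs.
Proof.
move=> tt' tx t'x; rewrite /cost; elim: bs => [|y bs IH]; rewrite ?big_nil ?big_cons //= IH.
by case: (eqVneq y x) => [->|yx]; rewrite ?tx ?t'x ?tt' //=; lia.
Qed.

Definition set_lit (a : tassign) (l : lit) : tassign :=
  fun y => if y == l.1 then l.2 else a y.

Lemma sat_set_lit a l m G :
  m \in G -> a m.1 == m.2 -> m != neg l -> sat_clause (set_lit a l) G.
Proof.
move=> mG am mnl; apply/hasP; rewrite /set_lit.
case: (eqVneq m.1 l.1) => [/lit_eq_or_neg [ml|ml] | ml]; last by exists m; rewrite ?ifN.
- by exists l; rewrite -?ml ?eqxx.
- by rewrite ml eqxx in mnl.
Qed.

Definition keeps_false (rule : cnf -> clause -> Prop) (x : nat) : Prop :=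
  forall F C a, sat a F -> a x = false -> rule F C ->
    exists2 a', sat a' (rcons F C) & a' x = false.

Lemma cost_LPR_keeps_false bs x : x \in bs -> keeps_false (cost_LPR bs) x.
Proof.
move=> xbs F C a aF ax [s [[y [[v [Cy sy]] s_neg]] [s_ent s_cost]]].
case aC: (sat_clause a C); first by exists a; rewrite ?sat_rcons ?aF ?aC.
have a_negC := extends_negC (negbT aC).
have as_off_y z : z != y -> Defs.comp a s z = a z.
  move=> /eqP zy; rewrite /Defs.comp s_neg //.
  by case Cz: (negC C z) => [w|] //; rewrite (a_negC _ _ Cz).
exists (Defs.comp a s).
  apply: sat_comp_restrict; apply/allP => D /(s_ent D) /(entails1_sound _) -> //.
  exact: sat_restrict.
case: (eqVneq x y) => [xy | xy]; last by rewrite as_off_y.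
(* [sigma] would flip [x] from [false] to [true], raising the cost. *)
subst y; have := s_cost a a_negC.
rewrite (@cost_set_true _ a (Defs.comp a s) x) //; last first.
  by rewrite /Defs.comp sy -(a_negC _ _ Cy) ax.
have : 0 < count_mem x bs by rewrite -has_count has_pred1.
lia.
Qed.

Lemma sat_set_lit_blocked a l E G :
  ~~ sat_clause a E -> sat_clause a G ->
  (neg l \in G -> tautology ([seq k <- E | k != l] ++ [seq k <- G | k != neg l])) ->
  sat_clause (set_lit a l) G.
Proof.
move=> /hasPn aE aG blocked; case nlG: (neg l \in G); last first.
  case/hasP: aG => m mG am; apply: (sat_set_lit mG am).
  by apply: contraFneq nlG => <-.
have /hasP [m] := tautology_sat a (blocked nlG).
rewrite mem_cat !mem_filter => /orP [/andP [_ mE] | /andP [mnl mG]] am.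
- by have := aE m mE; rewrite am.
- exact: sat_set_lit mG am mnl.
Qed.

Lemma cost_BC_keeps_false bs x : x \in bs -> keeps_false (cost_BC bs) x.
Proof.
move=> xbs F E a aF ax [l [lE [blocked not_pos_blocking]]].
case aE: (sat_clause a E); first by exists a; rewrite ?sat_rcons ?aF ?aE.
exists (set_lit a l).
  rewrite sat_rcons; apply/andP; split.
    apply/allP => G GF; apply: sat_set_lit_blocked (negbT aE) (allP aF G GF) _.
    exact: blocked.
  by apply/hasP; exists l; rewrite /set_lit ?eqxx.
rewrite /set_lit; case: eqP => // xl.
by move: not_pos_blocking; rewrite -xl xbs andbT => /negbTE.
Qed.

Lemma step_keeps_false rule x G prev D a :
  keeps_false rule x -> sat a (G ++ prev) -> a x = false -> step rule G prev D ->
  exists2 a', sat a' (rcons (G ++ prev) D) & a' x = false.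
Proof.
move=> rule_x aGp ax st.
have keep_a : sat_clause a D -> exists2 a', sat a' (rcons (G ++ prev) D) & a' x = false.
  by move=> aD; exists a; rewrite ?sat_rcons ?aGp ?aD.
have sat_prev A : A \in prev -> sat_clause a A.
  by move=> Ap; apply: (allP aGp); rewrite mem_cat Ap orbT.
case: st => [DG | [[A [Ap AD]] | [[A [B [y [Ap [Bp [_ [_ eD]]]]]]] | [ruleD _]]]].
- by apply/keep_a/(allP aGp); rewrite mem_cat DG.
- exact/keep_a/(weakening_sat (sat_prev A Ap) AD).
- exact/keep_a/(resolvent_sat (sat_prev A Ap) (sat_prev B Bp) eD).
- exact: rule_x aGp ax ruleD.
Qed.

Lemma derivation_keeps_false rule x G Ds a :
  keeps_false rule x -> sat a G -> a x = false -> derivation rule G Ds ->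
  exists2 a', sat a' (G ++ Ds) & a' x = false.
Proof.
move=> rule_x aG ax der; rewrite -(take_size Ds).
elim: {-2}(size Ds) (leqnn (size Ds)) => [|i IH] iDs.
  by exists a; rewrite ?take0 ?cats0.
have [a' a'G a'x] := IH (ltnW iDs).
rewrite (take_nth [::] iDs) -rcons_cat.
exact: step_keeps_false rule_x a'G a'x (der i iDs).
Qed.

Lemma derivation_no_unit rule x G Ds a :
  keeps_false rule x -> sat a G -> a x = false -> derivation rule G Ds ->
  forall D, D \in Ds -> ~ D =i [:: (x, true)].
Proof.
move=> rule_x aG ax der D DDs eD.
have [a' a'GDs a'x] := derivation_keeps_false rule_x aG ax der.
have /hasP [l] : sat_clause a' D by apply: (allP a'GDs); rewrite mem_cat DDs orbT.
by rewrite eD inE => /eqP -> /=; rewrite a'x.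
Qed.

Theorem corollary5p2 :
  exists (H : cnf) (soft : seq (clause * nat)),
    wf_instance H soft /\
    has_cost (instance H soft) (blocking soft) 1 /\
    (forall Ds, derivation (cost_LPR (blocking soft)) (instance H soft) Ds ->
       forall D b, D \in Ds -> b \in blocking soft -> ~ (D =i [:: (b, true)])) /\
    (forall Ds, derivation (cost_BC (blocking soft)) (instance H soft) Ds ->
       forall D b, D \in Ds -> b \in blocking soft -> ~ (D =i [:: (b, true)])).
Proof.
exists [::], [:: ([:: (0, true)], 1); ([:: (0, false)], 2)].
set soft := [:: ([:: (0, true)], 1); ([:: (0, false)], 2)].
have model_with_false b : b \in blocking soft ->
    exists2 a, sat a (instance [::] soft) & a b = false.
  by rewrite !inE => /orP [] /eqP ->; [exists (fun y => y != 1) | exists (fun y => y == 1)].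
split; [|split; [|split]].
- by split => // b; rewrite !inE => /orP [] /eqP ->.
- split; first by exists (fun y => y == 1); rewrite /cost !big_cons big_nil.
  by move=> a; rewrite /sat /cost /= !big_cons big_nil; case: (a 0); case: (a 1); case: (a 2).
- move=> Ds der D b DDs bs; have [a aG ab] := model_with_false b bs.
  exact: derivation_no_unit (cost_LPR_keeps_false bs) aG ab der D DDs.
- move=> Ds der D b DDs bs; have [a aG ab] := model_with_false b bs.
  exact: derivation_no_unit (cost_BC_keeps_false bs) aG ab der D DDs.
Qed.
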